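(* In the Ornstein–Uhlenbeck setting described in the context, regard the optimal intervention boundaries as functions $a^*(\theta)$, $b^*(\theta)$ of the reference target $\theta$, all other parameters $(r,\rho,m,\sigma,c_1,c_2)$ being fixed. Then $\theta\mapsto a^*(\theta)$ and $\theta\mapsto b^*(\theta)$ are both increasing.
   Context: Fix parameters $r>0$, $\rho>0$, $m\in\mathbb{R}$, $\sigma>0$, a reference target $\theta$ (the logarithm of the central parity) and constants $c_1,c_2\in\mathbb{R}$ with $c_1+c_2>0$. The (log-)exchange rate controlled by $\nu=\xi-\eta$ (difference of two nondecreasing adapted left-continuous processes started at $0$, with increments on disjoint sets) evolves as $dX_t=\rho(m-X_t)dt+\sigma dB_t+d\xi_t-d\eta_t$, $X_0=x\in\mathbb{R}$, where $B$ is a Brownian motion. The central bank minimizes over admissible controls $\mathbb{E}_x[\int_0^\infty e^{-rs}\tfrac12(X_s-\theta)^2ds+c_1\int_0^\infty e^{-rs}d\xi_s+c_2\int_0^\infty e^{-rs}d\eta_s]$ (jumps included). Let $D_\alpha(y)=\frac{e^{-y^2/4}}{\Gamma(-\alpha)}\int_0^\infty t^{-\alpha-1}e^{-t^2/2-yt}dt$ ($\alpha<0$), $\widehat\phi(x)=e^{\rho(x-m)^2/(2\sigma^2)}D_{-(r+\rho)/\rho}\big(\tfrac{(x-m)\sqrt{2\rho}}{\sigma}\big)$, $\widehat\psi(x)=e^{\rho(x-m)^2/(2\sigma^2)}D_{-(r+\rho)/\rho}\big(-\tfrac{(x-m)\sqrt{2\rho}}{\sigma}\big)$, $\widehat m'(z)=\frac{2}{\sigma^2}e^{-\rho(z-m)^2/\sigma^2}$.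 The optimal intervention boundaries $a^*<b^*$ are the unique pair with $a^*<\theta-(r+\rho)c_1$ and $b^*>\theta+(r+\rho)c_2$ solving $\int_a^b(z-\theta+(r+\rho)c_1)\widehat m'\widehat\phi\,dz=-(r+\rho)(c_1+c_2)\int_b^\infty\widehat m'\widehat\phi\,dz$ and $\int_a^b(z-\theta-(r+\rho)c_2)\widehat m'\widehat\psi\,dz=(r+\rho)(c_1+c_2)\int_{-\infty}^a\widehat m'\widehat\psi\,dz$; the optimal policy keeps $X$ in $[a^*,b^*]$ by minimal reflection. *)

From Stdlib Require Import Reals.
From Coquelicot Require Import Coquelicot.
Open Scope R_scope.

Definition Gamma_fn (s : R) : R :=
  RInt_gen (fun t => Rpower t (s - 1) * exp (- t)) (at_right 0) (Rbar_locally p_infty).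

(* Parabolic cylinder function, integral representation for alpha < 0:
   D_alpha(y) = e^{-y^2/4}/Gamma(-alpha) * int_0^oo t^{-alpha-1} e^{-t^2/2 - y t} dt *)
Definition parabD (alpha y : R) : R :=
  exp (- y ^ 2 / 4) / Gamma_fn (- alpha) *
  RInt_gen (fun t => Rpower t (- alpha - 1) * exp (- t ^ 2 / 2 - y * t))
           (at_right 0) (Rbar_locally p_infty).

Definition phi_hat (r rho m sigma x : R) : R :=
  exp (rho * (x - m) ^ 2 / (2 * sigma ^ 2)) *
  parabD (- (r + rho) / rho) ((x - m) * sqrt (2 * rho) / sigma).

Definition psi_hat (r rho m sigma x : R) : R :=
  exp (rho * (x - m) ^ 2 / (2 * sigma ^ 2)) *
  parabD (- (r + rho) / rho) (- ((x - m) * sqrt (2 * rho) / sigma)).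

(* density of the speed measure: m'(z) = 2/sigma^2 e^{-rho (z-m)^2/sigma^2} *)
Definition m_hat' (rho m sigma z : R) : R :=
  2 / sigma ^ 2 * exp (- rho * (z - m) ^ 2 / sigma ^ 2).

Definition optimal_boundaries (r rho m sigma c1 c2 theta a b : R) : Prop :=
  a < b /\
  a < theta - (r + rho) * c1 /\
  b > theta + (r + rho) * c2 /\
  RInt (fun z => (z - theta + (r + rho) * c1) * m_hat' rho m sigma z
                   * phi_hat r rho m sigma z) a b
  = - (r + rho) * (c1 + c2) *
    RInt_gen (fun z => m_hat' rho m sigma z * phi_hat r rho m sigma z)
             (at_point b) (Rbar_locally p_infty) /\
  RInt (fun z => (z - theta - (r + rho) * c2) * m_hat' rho m sigma z
                   * psi_hat r rho m sigma z) a b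
  = (r + rho) * (c1 + c2) *
    RInt_gen (fun z => m_hat' rho m sigma z * psi_hat r rho m sigma z)
             (Rbar_locally m_infty) (at_point a).

(* Write p = m' phi_hat, q = m' psi_hat, alpha = theta - (r+rho) c1 and K = (r+rho)(c1+c2).
   The optimality equations for a target theta read
     int_a^b (z - alpha) p = - K int_b^oo p   and   int_a^b (z - alpha - K) q = K int_-oo^a q.
   Subtracting them for theta1 < theta2 cancels the tails: the linear functional
     balance f = int_a2^b2 (z - alpha2) f - int_a1^b1 (z - alpha1) f - K int_b1^b2 f
   vanishes at p and q, hence at every f_M = q(M) p - p(M) q.
   Since phi_hat(x) and psi_hat(x) are multiples of J(Y x) and J(- Y x), where
   J(y) = int_0^oo t^(r/rho) e^(-t^2/2 - y t) dt is positive, strictly decreasing and convex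
   (hence continuous), p/q is strictly decreasing and f_M changes sign exactly once, at M.
   If a1 < a2 and b1 < b2 failed, [a2, b2] would lie lower than, be wider than, or be
   narrower than [a1, b1]; taking M = b1, max b1 (alpha2 + K) or min a2 alpha1 respectively,
   balance f_M splits into terms of one sign, one of them strict: a contradiction. *)

From Stdlib Require Import Reals Lra Classical.
From Coquelicot Require Import Coquelicot.
Open Scope R_scope.

Lemma exp_le (x y : R) : x <= y -> exp x <= exp y.
Proof. intros [h | ->]; [left; apply exp_increasing, h | right; reflexivity]. Qed.

Lemma ex_RInt_of_continuous (f : R -> R) a b :
  a <= b -> (forall z, a <= z <= b -> continuous f z) -> ex_RInt f a b.
Proof.
  intros hab Hf. apply (ex_RInt_continuous (V := R_CompleteNormedModule)).
  rewrite Rmin_left, Rmax_right by lra. exact Hf.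
Qed.

Lemma ex_RInt_of_continuous_everywhere (f : R -> R) x y :
  (forall z, continuous f z) -> ex_RInt f x y.
Proof. intro Hf. apply (ex_RInt_continuous (V := R_CompleteNormedModule)). intros; apply Hf. Qed.

Lemma RInt_ext_R (f g : R -> R) (x y : R) :
  (forall z, f z = g z) -> RInt f x y = RInt g x y.
Proof. intro Hfg. apply RInt_ext. intros z _. apply Hfg. Qed.

Lemma RInt_Chasles_R (f : R -> R) a b c :
  ex_RInt f a b -> ex_RInt f b c -> RInt f a c = RInt f a b + RInt f b c.
Proof. intros hab hbc. symmetry. exact (RInt_Chasles f a b c hab hbc). Qed.

Lemma RInt_from_0 (f : R -> R) x y :
  (forall z, continuous f z) -> RInt f x y = RInt f 0 y - RInt f 0 x.
Proof.
  intro Hf. rewrite (RInt_Chasles_R f 0 x y) by (apply ex_RInt_of_continuous_everywhere, Hf).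
  symmetry. apply Rplus_minus_l.
Qed.

Lemma RInt_lincomb (f g : R -> R) (A B x y : R) : ex_RInt f x y -> ex_RInt g x y ->
  RInt (fun z => A * f z + B * g z) x y = A * RInt f x y + B * RInt g x y.
Proof.
  intros Hf Hg.
  rewrite (RInt_plus (V := R_CompleteNormedModule) (fun z => scal A (f z)) (fun z => scal B (g z)))
    by (apply (ex_RInt_scal (V := R_NormedModule)); assumption).
  rewrite !(RInt_scal (V := R_CompleteNormedModule)) by assumption. reflexivity.
Qed.

Lemma continuous_affine_weight (f : R -> R) (c z : R) :
  continuous f z -> continuous (fun z => (z - c) * f z) z.
Proof.
  intro Hf. apply (continuous_mult (fun z => z - c) f); [|exact Hf].
  apply (ex_derive_continuous (V := R_NormedModule)). auto_derive. exact I.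
Qed.

Lemma RInt_affine_weight_from_0 (f : R -> R) (c x y : R) : (forall z, continuous f z) ->
  RInt (fun z => (z - c) * f z) x y
  = (RInt (fun z => z * f z) 0 y - RInt (fun z => z * f z) 0 x) - c * (RInt f 0 y - RInt f 0 x).
Proof.
  intro Hf.
  assert (Hzf : forall z, continuous (fun z => z * f z) z).
  { intro z. apply (continuous_mult (fun z => z) f); [apply continuous_id | apply Hf]. }
  rewrite (RInt_ext_R (fun z => (z - c) * f z) (fun z => 1 * (z * f z) + (- c) * f z))
    by (intro; ring).
  rewrite RInt_lincomb by (apply ex_RInt_of_continuous_everywhere; assumption).
  rewrite (RInt_from_0 (fun z => z * f z) x y Hzf), (RInt_from_0 f x y Hf). simpl. ring.
Qed.

Lemma RInt_nonneg (g : R -> R) (x y : R) : (forall z, continuous g z) -> x <= y ->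
  (forall z, x < z < y -> 0 <= g z) -> 0 <= RInt g x y.
Proof.
  intros Hg hxy Hpos. apply RInt_ge_0; [exact hxy | | exact Hpos].
  apply ex_RInt_of_continuous_everywhere, Hg.
Qed.

Lemma RInt_nonpos (g : R -> R) (x y : R) : (forall z, continuous g z) -> x <= y ->
  (forall z, x < z < y -> g z <= 0) -> RInt g x y <= 0.
Proof.
  intros Hg hxy Hneg. apply Rle_trans with (RInt (fun _ => 0) x y).
  - apply RInt_le; [exact hxy | apply ex_RInt_of_continuous_everywhere, Hg | | exact Hneg].
    apply ex_RInt_const.
  - rewrite RInt_const. apply Req_le, Rmult_0_r.
Qed.

Lemma RInt_neg (g : R -> R) (x y : R) : (forall z, continuous g z) -> x < y ->
  (forall z, x < z < y -> g z < 0) -> RInt g x y < 0.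
Proof.
  intros Hg hxy Hneg. apply Rlt_le_trans with (RInt (fun _ => 0) x y).
  - apply RInt_lt; [exact hxy | intros; apply continuous_const | intros; apply Hg | exact Hneg].
  - rewrite RInt_const. apply Req_le, Rmult_0_r.
Qed.

Lemma RInt_swap (g : R -> R) (x y : R) : (forall z, continuous g z) ->
  RInt g y x = - RInt g x y.
Proof.
  intro Hg. symmetry. apply (opp_RInt_swap (V := R_CompleteNormedModule)).
  apply ex_RInt_of_continuous_everywhere, Hg.
Qed.

Lemma RInt_le_subinterval (f : R -> R) a a' b' b :
  a <= a' -> a' <= b' -> b' <= b ->
  (forall z, a <= z <= b -> continuous f z /\ 0 <= f z) ->
  RInt f a' b' <= RInt f a b.
Proof.
  intros ha hab hb Hf.
  assert (ex : forall x y, a <= x -> x <= y -> y <= b -> ex_RInt f x y).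
  { intros x y hx hxy hy. apply ex_RInt_of_continuous; [lra|].
    intros z hz. apply Hf. lra. }
  assert (pos : forall x y, a <= x -> x <= y -> y <= b -> 0 <= RInt f x y).
  { intros x y hx hxy hy. apply RInt_ge_0; auto.
    intros z hz. apply Hf. lra. }
  rewrite (RInt_Chasles_R f a a' b), (RInt_Chasles_R f a' b' b) by (apply ex; lra).
  assert (0 <= RInt f a a') by (apply pos; lra).
  assert (0 <= RInt f b' b) by (apply pos; lra).
  lra.
Qed.

Lemma RInt_scal_exp (C mu a b : R) : mu <> 0 ->
  RInt (fun z => C * exp (mu * z)) a b = C / mu * (exp (mu * b) - exp (mu * a)).
Proof.
  intro Hmu. apply is_RInt_unique.
  replace (C / mu * (exp (mu * b) - exp (mu * a)))
    with (C / mu * exp (mu * b) - C / mu * exp (mu * a)) by ring.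
  apply (is_RInt_derive (fun z => C / mu * exp (mu * z))).
  - intros z _. auto_derive; [exact I | field; exact Hmu].
  - intros z _. apply (ex_derive_continuous (V := R_NormedModule)). auto_derive. exact I.
Qed.

Lemma RInt_le_scal_exp (f : R -> R) (C mu a b : R) : mu <> 0 -> a <= b ->
  (forall z, a <= z <= b -> continuous f z /\ f z <= C * exp (mu * z)) ->
  RInt f a b <= C / mu * (exp (mu * b) - exp (mu * a)).
Proof.
  intros Hmu hab Hf. rewrite <- RInt_scal_exp by exact Hmu.
  apply RInt_le; [exact hab | | | intros z hz; apply Hf; lra].
  - apply ex_RInt_of_continuous; [exact hab|]. intros z hz. apply Hf, hz.
  - apply ex_RInt_of_continuous; [exact hab|]. intros z _.
    apply (ex_derive_continuous (V := R_NormedModule)). auto_derive. exact I.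
Qed.

Lemma is_RInt_gen_of_RInt_lim {Fa Fb : (R -> Prop) -> Prop} {FFa : Filter Fa} {FFb : Filter Fb}
    (f : R -> R) (l : R) :
  filter_prod Fa Fb (fun ab => ex_RInt f (fst ab) (snd ab)) ->
  filterlim (fun ab => RInt f (fst ab) (snd ab)) (filter_prod Fa Fb) (locally l) ->
  is_RInt_gen f Fa Fb l.
Proof.
  intros Hex Hlim P HP. unfold filtermapi.
  apply filter_imp with
    (fun ab => ex_RInt f (fst ab) (snd ab) /\ P (RInt f (fst ab) (snd ab))).
  - intros ab [H1 H2]. exists (RInt f (fst ab) (snd ab)). split; [|exact H2].
    exact (RInt_correct (V := R_CompleteNormedModule) f _ _ H1).
  - apply filter_and; [exact Hex | exact (Hlim P HP)].
Qed.

Lemma is_RInt_gen_ge {Fa Fb : (R -> Prop) -> Prop} {FFa : ProperFilter Fa} {FFb : ProperFilter Fb}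
    (f : R -> R) (c l : R) :
  filter_prod Fa Fb (fun ab => c <= RInt f (fst ab) (snd ab)) ->
  is_RInt_gen f Fa Fb l -> c <= l.
Proof.
  intros Hc Hl. destruct (Rle_lt_dec c l) as [h|h]; [exact h|]. exfalso.
  assert (eps : 0 < (c - l) / 2) by lra.
  specialize (Hl (ball l (mkposreal _ eps)) (locally_ball _ _)). unfold filtermapi in Hl.
  assert (Fab : ProperFilter (filter_prod Fa Fb)) by (apply filter_prod_proper; auto).
  destruct (filter_ex _ (filter_and _ _ Hl Hc)) as [ab [[y [Hy Hball]] Hcy]].
  rewrite (is_RInt_unique _ _ _ _ Hy) in Hcy.
  change (Rabs (y - l) < (c - l) / 2) in Hball. apply Rabs_def2 in Hball. lra.
Qed.

(* Monotone convergence: the partial integrals grow as the endpoints move outwards through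
   Da and Db, and are bounded by B, so they converge to their supremum. *)
Lemma ex_RInt_gen_nonneg_bounded {Fa Fb : (R -> Prop) -> Prop}
    {FFa : ProperFilter Fa} {FFb : ProperFilter Fb}
    (f : R -> R) (Da Db : R -> Prop) (B : R) :
  Fa Da -> Fb Db ->
  (forall a0, Da a0 -> Fa (fun a => Da a /\ a <= a0)) ->
  (forall b0, Db b0 -> Fb (fun b => Db b /\ b0 <= b)) ->
  (forall a b, Da a -> Db b ->
     a <= b /\ forall z, a <= z <= b -> continuous f z /\ 0 <= f z) ->
  (forall a b, Da a -> Db b -> RInt f a b <= B) ->
  ex_RInt_gen f Fa Fb.
Proof.
  intros HDa HDb Hlow Hup Hf HB.
  destruct (filter_ex Da HDa) as [a0 Ha0]. destruct (filter_ex Db HDb) as [b0 Hb0].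
  set (E := fun v => exists a b, Da a /\ Db b /\ v = RInt f a b).
  destruct (completeness E) as [l [Hub Hlub]].
  { exists B. intros v (a & b & ha & hb & ->). auto. }
  { exists (RInt f a0 b0). unfold E. eauto. }
  exists l. apply is_RInt_gen_of_RInt_lim.
  - apply (Filter_prod _ _ _ Da Db HDa HDb). intros a b ha hb.
    destruct (Hf a b ha hb) as [hab hfab].
    apply ex_RInt_of_continuous; [exact hab|]. intros z hz. apply hfab, hz.
  - apply filterlim_locally. intros eps.
    assert (Hnear : exists a1 b1, Da a1 /\ Db b1 /\ l - eps < RInt f a1 b1).
    { apply NNPP. intro Hno.
      assert (l <= l - eps); [|destruct eps; simpl in *; lra].
      apply Hlub. intros v (a & b & ha & hb & ->).
      apply Rnot_lt_le. intro hlt. apply Hno. eauto. }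
    destruct Hnear as (a1 & b1 & ha1 & hb1 & hlt).
    apply (Filter_prod _ _ _ _ _ (Hlow a1 ha1) (Hup b1 hb1)).
    intros a b [ha haa] [hb hbb]. simpl.
    assert (RInt f a1 b1 <= RInt f a b).
    { apply RInt_le_subinterval; [exact haa | apply (Hf a1 b1 ha1 hb1) | exact hbb |].
      apply (Hf a b ha hb). }
    assert (RInt f a b <= l) by (apply Hub; unfold E; eauto).
    change (Rabs (RInt f a b - l) < eps). apply Rabs_def1; lra.
Qed.

Lemma exp_bound_coef_nonneg (v C x : R) : 0 <= v <= C * exp x -> 0 <= C.
Proof. intros [h0 h1]. pose proof (exp_pos x). nra. Qed.

Lemma at_right_lt (x y : R) : x < y -> at_right x (fun z => x < z < y).
Proof.
  intro hxy. exists (mkposreal (y - x) ltac:(lra)). intros z hz hxz.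
  change (Rabs (z - x) < y - x) in hz. apply Rabs_def2 in hz. lra.
Qed.

Lemma ex_RInt_gen_at_point_pinfty (f : R -> R) (b C mu : R) : mu < 0 ->
  (forall z, b <= z -> continuous f z /\ 0 <= f z <= C * exp (mu * z)) ->
  ex_RInt_gen f (at_point b) (Rbar_locally p_infty).
Proof.
  intros Hmu Hf.
  assert (HC : 0 <= C) by (apply (exp_bound_coef_nonneg (f b) C (mu * b)), Hf; lra).
  assert (HCmu : C / mu <= 0).
  { assert (/ mu < 0) by (apply Rinv_lt_0_compat; lra). unfold Rdiv. nra. }
  apply (ex_RInt_gen_nonneg_bounded f (fun a => a = b) (fun x => b <= x)
           (- (C / mu) * exp (mu * b))).
  - reflexivity.
  - exists b. intros x hx. lra.
  - intros a0 ->. split; [reflexivity | lra].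
  - intros b0 hb0. exists b0. intros x hx. lra.
  - intros a x -> hx. split; [exact hx|]. intros z hz. split; apply Hf; lra.
  - intros a x -> hx.
    eapply Rle_trans; [apply (RInt_le_scal_exp f C mu); [lra | exact hx |]|].
    + intros z hz. split; apply Hf; lra.
    + pose proof (exp_pos (mu * x)). nra.
Qed.

Lemma ex_RInt_gen_minfty_at_point (f : R -> R) (a C mu : R) : 0 < mu ->
  (forall z, z <= a -> continuous f z /\ 0 <= f z <= C * exp (mu * z)) ->
  ex_RInt_gen f (Rbar_locally m_infty) (at_point a).
Proof.
  intros Hmu Hf.
  assert (HC : 0 <= C) by (apply (exp_bound_coef_nonneg (f a) C (mu * a)), Hf; lra).
  assert (HCmu : 0 <= C / mu) by (apply Rdiv_le_0_compat; lra).
  apply (ex_RInt_gen_nonneg_bounded f (fun x => x <= a) (fun y => y = a)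
           (C / mu * exp (mu * a))).
  - exists a. intros x hx. lra.
  - reflexivity.
  - intros a0 ha0. exists a0. intros x hx. lra.
  - intros b0 ->. split; [reflexivity | lra].
  - intros x b hx ->. split; [exact hx|]. intros z hz. split; apply Hf; lra.
  - intros x b hx ->.
    eapply Rle_trans; [apply (RInt_le_scal_exp f C mu); [lra | exact hx |]|].
    + intros z hz. split; apply Hf; lra.
    + pose proof (exp_pos (mu * x)). nra.
Qed.

Lemma ex_RInt_gen_0_pinfty (f : R -> R) (C mu : R) : mu < 0 ->
  (forall z, 0 < z -> continuous f z /\ 0 <= f z <= C * exp (mu * z)) ->
  ex_RInt_gen f (at_right 0) (Rbar_locally p_infty).
Proof.
  intros Hmu Hf.
  assert (HC : 0 <= C) by (apply (exp_bound_coef_nonneg (f 1) C (mu * 1)), Hf; lra).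
  assert (HCmu : C / mu <= 0).
  { assert (/ mu < 0) by (apply Rinv_lt_0_compat; lra). unfold Rdiv. nra. }
  apply (ex_RInt_gen_nonneg_bounded f (fun a => 0 < a < 1) (fun x => 1 <= x) (- (C / mu))).
  - apply at_right_lt. lra.
  - exists 1. intros x hx. lra.
  - intros a0 ha0. apply (filter_imp (fun a => 0 < a < a0)); [intros; lra|].
    apply at_right_lt. lra.
  - intros b0 hb0. exists b0. intros x hx. lra.
  - intros a x ha hx. split; [lra|]. intros z hz. split; apply Hf; lra.
  - intros a x ha hx.
    eapply Rle_trans; [apply (RInt_le_scal_exp f C mu); [lra | lra |]|].
    + intros z hz. split; apply Hf; lra.
    + assert (exp (mu * a) <= 1) by (rewrite <- exp_0; apply exp_le; nra).
      pose proof (exp_pos (mu * x)). nra.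
Qed.

Lemma RInt_gen_pinfty_Chasles (f : R -> R) (x y : R) : (forall z, continuous f z) ->
  ex_RInt_gen f (at_point y) (Rbar_locally p_infty) ->
  RInt_gen f (at_point x) (Rbar_locally p_infty)
  = RInt f x y + RInt_gen f (at_point y) (Rbar_locally p_infty).
Proof.
  intros Hf Hy.
  assert (Hxy : ex_RInt f x y) by (apply ex_RInt_of_continuous_everywhere, Hf).
  rewrite <- (RInt_gen_at_point f x y Hxy).
  symmetry. apply (RInt_gen_Chasles (V := R_CompleteNormedModule));
    [apply ex_RInt_gen_at_point, Hxy | exact Hy].
Qed.

Lemma RInt_gen_minfty_Chasles (f : R -> R) (x y : R) : (forall z, continuous f z) ->
  ex_RInt_gen f (Rbar_locally m_infty) (at_point x) ->
  RInt_gen f (Rbar_locally m_infty) (at_point y)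
  = RInt_gen f (Rbar_locally m_infty) (at_point x) + RInt f x y.
Proof.
  intros Hf Hx.
  assert (Hxy : ex_RInt f x y) by (apply ex_RInt_of_continuous_everywhere, Hf).
  rewrite <- (RInt_gen_at_point f x y Hxy).
  symmetry. apply (RInt_gen_Chasles (V := R_CompleteNormedModule));
    [exact Hx | apply ex_RInt_gen_at_point, Hxy].
Qed.

Lemma RInt_le_is_RInt_gen_0_pinfty (f : R -> R) (x y l : R) : 0 < x -> x <= y ->
  (forall z, 0 < z -> continuous f z /\ 0 <= f z) ->
  is_RInt_gen f (at_right 0) (Rbar_locally p_infty) l -> RInt f x y <= l.
Proof.
  intros hx hxy Hf Hl. refine (is_RInt_gen_ge f _ _ _ Hl).
  apply (Filter_prod _ _ _ (fun a => 0 < a < x) (fun b => y < b)).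
  - apply at_right_lt, hx.
  - exists y. intros b hb. exact hb.
  - intros a b ha hb. apply RInt_le_subinterval; simpl; try lra.
    intros z hz. apply Hf. lra.
Qed.

Lemma is_RInt_gen_0_pinfty_nonneg (f : R -> R) (l : R) :
  (forall z, 0 < z -> continuous f z /\ 0 <= f z) ->
  is_RInt_gen f (at_right 0) (Rbar_locally p_infty) l -> 0 <= l.
Proof.
  intros Hf Hl. apply Rle_trans with (RInt f 1 2).
  - apply RInt_ge_0; [lra | | intros z hz; apply Hf; lra].
    apply ex_RInt_of_continuous; [lra|]. intros z hz. apply Hf. lra.
  - apply RInt_le_is_RInt_gen_0_pinfty; [lra | lra | exact Hf | exact Hl].
Qed.

Lemma is_RInt_gen_0_pinfty_pos (f : R -> R) (l : R) :
  (forall z, 0 < z -> continuous f z /\ 0 < f z) ->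
  is_RInt_gen f (at_right 0) (Rbar_locally p_infty) l -> 0 < l.
Proof.
  intros Hf Hl. apply Rlt_le_trans with (RInt f 1 2).
  - apply RInt_gt_0; [lra | intros z hz; apply Hf; lra | intros z hz; apply Hf; lra].
  - apply RInt_le_is_RInt_gen_0_pinfty; [lra | lra | | exact Hl].
    intros z hz. split; [|apply Rlt_le]; apply Hf, hz.
Qed.

Lemma is_RInt_gen_0_pinfty_le (f g : R -> R) (lf lg : R) :
  (forall z, 0 < z -> continuous f z /\ continuous g z /\ f z <= g z) ->
  is_RInt_gen f (at_right 0) (Rbar_locally p_infty) lf ->
  is_RInt_gen g (at_right 0) (Rbar_locally p_infty) lg -> lf <= lg.
Proof.
  intros Hfg Hf Hg.
  cut (0 <= lg - lf); [lra|].
  apply (is_RInt_gen_0_pinfty_nonneg (fun z => g z - f z)).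
  - intros z hz. destruct (Hfg z hz) as (cf & cg & le). split; [|lra].
    apply (continuous_minus g f); assumption.
  - exact (is_RInt_gen_minus g f lg lf Hg Hf).
Qed.

Lemma is_RInt_gen_0_pinfty_lt (f g : R -> R) (lf lg : R) :
  (forall z, 0 < z -> continuous f z /\ continuous g z /\ f z < g z) ->
  is_RInt_gen f (at_right 0) (Rbar_locally p_infty) lf ->
  is_RInt_gen g (at_right 0) (Rbar_locally p_infty) lg -> lf < lg.
Proof.
  intros Hfg Hf Hg.
  cut (0 < lg - lf); [lra|].
  apply (is_RInt_gen_0_pinfty_pos (fun z => g z - f z)).
  - intros z hz. destruct (Hfg z hz) as (cf & cg & lt). split; [|lra].
    apply (continuous_minus g f); assumption.
  - exact (is_RInt_gen_minus g f lg lf Hg Hf).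
Qed.

(** * Convex functions are continuous *)

Definition convex (F : R -> R) : Prop :=
  forall u v l, 0 <= l <= 1 -> F (l * u + (1 - l) * v) <= l * F u + (1 - l) * F v.

Lemma convex_increment_bound (F : R -> R) (y h : R) : convex F -> 0 <= h <= 1 ->
  Rabs (F (y + h) - F y) <= (Rabs (F (y + 1) - F y) + Rabs (F (y - 1) - F y)) * h.
Proof.
  intros HF hh.
  assert (up : F (y + h) <= h * F (y + 1) + (1 - h) * F y).
  { replace (y + h) with (h * (y + 1) + (1 - h) * y) by ring. apply HF, hh. }
  assert (low : (1 + h) * F y <= F (y + h) + h * F (y - 1)).
  { assert (hl : 0 <= 1 / (1 + h) <= 1).
    { split; [apply Rlt_le, Rdiv_lt_0_compat; lra|].
      apply Rmult_le_reg_l with (1 + h); [lra|]. field_simplify; lra. }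
    pose proof (HF (y + h) (y - 1) _ hl) as H.
    replace (1 / (1 + h) * (y + h) + (1 - 1 / (1 + h)) * (y - 1)) with y in H
      by (field; lra).
    apply Rmult_le_compat_l with (r := 1 + h) in H; [|lra].
    replace ((1 + h) * (1 / (1 + h) * F (y + h) + (1 - 1 / (1 + h)) * F (y - 1)))
      with (F (y + h) + h * F (y - 1)) in H by (field; lra).
    exact H. }
  set (A := Rabs (F (y + 1) - F y)). set (B := Rabs (F (y - 1) - F y)).
  assert (h * (F (y + 1) - F y) <= h * A)
    by (apply Rmult_le_compat_l; [lra | apply Rle_abs]).
  assert (h * (F (y - 1) - F y) <= h * B)
    by (apply Rmult_le_compat_l; [lra | apply Rle_abs]).
  assert (0 <= h * A) by (apply Rmult_le_pos; [lra | apply Rabs_pos]).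
  assert (0 <= h * B) by (apply Rmult_le_pos; [lra | apply Rabs_pos]).
  apply Rabs_le. split; nra.
Qed.

Lemma continuous_of_local_lipschitz (F : R -> R) (y D : R) :
  (forall h, Rabs h <= 1 -> Rabs (F (y + h) - F y) <= D * Rabs h) -> continuous F y.
Proof.
  intros HF. apply continuity_pt_filterlim.
  intros eps heps.
  exists (Rmin 1 (eps / (Rabs D + 1))). split.
  { apply Rmin_glb_lt; [lra|]. apply Rdiv_lt_0_compat; [lra|]. pose proof (Rabs_pos D). lra. }
  intros x [_ hx]. simpl in *. unfold R_dist in *.
  assert (h1 : Rabs (x - y) <= 1) by (pose proof (Rmin_l 1 (eps / (Rabs D + 1))); lra).
  assert (h2 : Rabs (x - y) * (Rabs D + 1) < eps).
  { pose proof (Rmin_r 1 (eps / (Rabs D + 1))). pose proof (Rabs_pos D).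
    apply Rmult_lt_reg_r with (/ (Rabs D + 1)); [apply Rinv_0_lt_compat; lra|].
    rewrite Rmult_assoc, Rinv_r, Rmult_1_r by lra. lra. }
  specialize (HF (x - y) h1). replace (y + (x - y)) with x in HF by ring.
  pose proof (Rabs_pos (x - y)). pose proof (Rle_abs D). nra.
Qed.

Lemma continuous_of_convex (F : R -> R) (y : R) : convex F -> continuous F y.
Proof.
  intros HF.
  apply (continuous_of_local_lipschitz F y (Rabs (F (y + 1) - F y) + Rabs (F (y - 1) - F y))).
  intros h hh. destruct (Rle_or_lt 0 h) as [h0 | h0].
  - rewrite (Rabs_pos_eq h h0). apply convex_increment_bound; [exact HF|].
    rewrite Rabs_pos_eq in hh; lra.
  - (* The case h < 0 is the case h > 0 for x |-> F (- x). *)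
    assert (HG : convex (fun x => F (- x))).
    { intros u v l hl. replace (- (l * u + (1 - l) * v)) with (l * - u + (1 - l) * - v) by ring.
      apply HF, hl. }
    rewrite (Rabs_left h h0) in hh |- *.
    pose proof (convex_increment_bound _ (- y) (- h) HG ltac:(lra)) as H. cbv beta in H.
    replace (- (- y + - h)) with (y + h) in H by ring.
    replace (- (- y + 1)) with (y - 1) in H by ring.
    replace (- (- y - 1)) with (y + 1) in H by ring.
    rewrite Ropp_involutive in H. lra.
Qed.

Lemma exp_convex : convex exp.
Proof.
  intros u v l hl. set (w := l * u + (1 - l) * v).
  assert (tangent : forall x, exp w * (1 + (x - w)) <= exp x).
  { intro x. replace (exp x) with (exp w * exp (x - w)) by (rewrite <- exp_plus; f_equal; ring).
    apply Rmult_le_compat_l; [apply Rlt_le, exp_pos | apply exp_ineq1_le]. }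
  pose proof (tangent u). pose proof (tangent v).
  assert (l * (exp w * (1 + (u - w))) + (1 - l) * (exp w * (1 + (v - w))) = exp w)
    by (unfold w; ring).
  nra.
Qed.

(** * The parabolic cylinder integral *)

Lemma Rpower_le_exp (t k eps : R) : 0 < t -> 0 < k -> 0 < eps ->
  Rpower t k <= exp (k * ln (k / eps) - k) * exp (eps * t).
Proof.
  intros ht hk heps. unfold Rpower. rewrite <- exp_plus. apply exp_le.
  assert (hx : 0 < eps * t / k) by (apply Rdiv_lt_0_compat; nra).
  assert (Hln : ln t = ln (eps * t / k) + ln (k / eps)).
  { rewrite <- ln_mult by (exact hx || (apply Rdiv_lt_0_compat; lra)). f_equal. field. lra. }
  pose proof (exp_ineq1_le (ln (eps * t / k))) as H. rewrite exp_ln in H by exact hx.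
  assert (k * ln (eps * t / k) <= eps * t - k).
  { replace (eps * t - k) with (k * (eps * t / k - 1)) by (field; lra).
    apply Rmult_le_compat_l; lra. }
  rewrite Hln. nra.
Qed.

Definition parab_kernel (k y t : R) : R := Rpower t k * exp (- t ^ 2 / 2 - y * t).

Definition parabJ (k y : R) : R :=
  RInt_gen (parab_kernel k y) (at_right 0) (Rbar_locally p_infty).

Lemma continuous_parab_kernel (k y t : R) : 0 < t -> continuous (parab_kernel k y) t.
Proof.
  intro ht. apply (ex_derive_continuous (V := R_NormedModule)).
  unfold parab_kernel, Rpower. auto_derive. exact ht.
Qed.

Lemma parab_kernel_pos (k y t : R) : 0 < parab_kernel k y t.
Proof. apply Rmult_lt_0_compat; apply exp_pos. Qed.

Lemma is_parabJ (k y : R) : 0 < k ->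
  is_RInt_gen (parab_kernel k y) (at_right 0) (Rbar_locally p_infty) (parabJ k y).
Proof.
  intro hk. apply (RInt_gen_correct (V := R_CompleteNormedModule)).
  apply (ex_RInt_gen_0_pinfty _ (exp (k * ln (k / 1) - k) * exp ((2 - y) ^ 2 / 2)) (-1));
    [lra|].
  intros t ht. split; [apply continuous_parab_kernel, ht|].
  split; [apply Rlt_le, parab_kernel_pos|]. unfold parab_kernel.
  eapply Rle_trans.
  { apply Rmult_le_compat_r; [apply Rlt_le, exp_pos | apply (Rpower_le_exp t k 1); lra]. }
  rewrite !Rmult_assoc, <- !exp_plus. apply exp_le. pose proof (pow2_ge_0 (2 - y - t)). nra.
Qed.

Lemma parabJ_pos (k y : R) : 0 < k -> 0 < parabJ k y.
Proof.
  intro hk. refine (is_RInt_gen_0_pinfty_pos _ _ _ (is_parabJ k y hk)).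
  intros t ht. split; [apply continuous_parab_kernel, ht | apply parab_kernel_pos].
Qed.

Lemma parabJ_decreasing (k y1 y2 : R) : 0 < k -> y1 < y2 -> parabJ k y2 < parabJ k y1.
Proof.
  intros hk hy. refine (is_RInt_gen_0_pinfty_lt _ _ _ _ _ (is_parabJ k y2 hk) (is_parabJ k y1 hk)).
  intros t ht. split; [|split]; try apply continuous_parab_kernel, ht.
  apply Rmult_lt_compat_l; [apply exp_pos|]. apply exp_increasing. nra.
Qed.

Lemma parabJ_convex (k : R) : 0 < k -> convex (parabJ k).
Proof.
  intros hk u v l hl.
  pose proof (is_RInt_gen_plus _ _ _ _
    (is_RInt_gen_scal _ l _ (is_parabJ k u hk))
    (is_RInt_gen_scal _ (1 - l) _ (is_parabJ k v hk))) as Hcomb.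
  refine (is_RInt_gen_0_pinfty_le (parab_kernel k (l * u + (1 - l) * v))
    (fun t => l * parab_kernel k u t + (1 - l) * parab_kernel k v t) _ _ _
    (is_parabJ k _ hk) Hcomb).
  intros t ht. split; [apply continuous_parab_kernel, ht|]. split.
  - apply (continuous_plus (fun t => l * parab_kernel k u t) (fun t => (1 - l) * parab_kernel k v t));
      apply (continuous_scal_r _ (parab_kernel k _)), continuous_parab_kernel, ht.
  - unfold parab_kernel.
    pose proof (exp_convex (- t ^ 2 / 2 - u * t) (- t ^ 2 / 2 - v * t) l hl) as H.
    replace (l * (- t ^ 2 / 2 - u * t) + (1 - l) * (- t ^ 2 / 2 - v * t))
      with (- t ^ 2 / 2 - (l * u + (1 - l) * v) * t) in H by ring.
    pose proof (exp_pos (k * ln t)). unfold Rpower. nra.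
Qed.

Lemma continuous_parabJ (k y : R) : 0 < k -> continuous (parabJ k) y.
Proof. intro hk. apply continuous_of_convex, parabJ_convex, hk. Qed.

Lemma Gamma_fn_pos (s : R) : 1 < s -> 0 < Gamma_fn s.
Proof.
  intro hs. set (f := fun t => Rpower t (s - 1) * exp (- t)).
  assert (Hf : forall t, 0 < t -> continuous f t /\ 0 < f t).
  { intros t ht. split.
    - apply (ex_derive_continuous (V := R_NormedModule)). unfold f, Rpower. auto_derive. exact ht.
    - apply Rmult_lt_0_compat; apply exp_pos. }
  refine (is_RInt_gen_0_pinfty_pos f _ Hf _).
  apply (RInt_gen_correct (V := R_CompleteNormedModule)).
  apply (ex_RInt_gen_0_pinfty f (exp ((s - 1) * ln ((s - 1) / (1 / 2)) - (s - 1))) (- (1 / 2)));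
    [lra|].
  intros t ht. split; [apply Hf, ht|]. split; [apply Rlt_le, Hf, ht|]. unfold f.
  eapply Rle_trans.
  { apply Rmult_le_compat_r; [apply Rlt_le, exp_pos | apply (Rpower_le_exp t (s - 1) (1 / 2)); lra]. }
  rewrite !Rmult_assoc, <- !exp_plus. apply exp_le. lra.
Qed.

(** * The speed density and the fundamental solutions *)

Section OrnsteinUhlenbeck.

Variables r rho m sigma : R.
Hypotheses (r_pos : 0 < r) (rho_pos : 0 < rho) (sigma_pos : 0 < sigma).

Local Notation m' := (m_hat' rho m sigma).
Local Notation phi := (phi_hat r rho m sigma).
Local Notation psi := (psi_hat r rho m sigma).

(* s = 1 + r / rho, written as in phi_hat so that unfolding phi_hat matches by conversion. *)
Let s := - (- (r + rho) / rho).
Let Y (x : R) := (x - m) * sqrt (2 * rho) / sigma.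

Fact s_gt_1 : 1 < s.
Proof.
  unfold s. replace (- (- (r + rho) / rho)) with (1 + r / rho) by (field; lra).
  pose proof (Rdiv_lt_0_compat r rho r_pos rho_pos). lra.
Qed.

Lemma gauss_factor_cancel (x y : R) : y ^ 2 = Y x ^ 2 ->
  exp (rho * (x - m) ^ 2 / (2 * sigma ^ 2)) * exp (- y ^ 2 / 4) = 1.
Proof.
  intro hy. rewrite <- exp_plus, <- exp_0. f_equal. rewrite hy. unfold Y.
  replace (((x - m) * sqrt (2 * rho) / sigma) ^ 2)
    with ((x - m) ^ 2 * (sqrt (2 * rho) * sqrt (2 * rho)) / sigma ^ 2) by (field; lra).
  rewrite sqrt_sqrt by lra. field. lra.
Qed.

Lemma phi_hat_parabJ (x : R) : phi x = parabJ (s - 1) (Y x) / Gamma_fn s.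
Proof.
  pose proof (Gamma_fn_pos s s_gt_1).
  change (exp (rho * (x - m) ^ 2 / (2 * sigma ^ 2)) *
          (exp (- Y x ^ 2 / 4) / Gamma_fn s * parabJ (s - 1) (Y x))
          = parabJ (s - 1) (Y x) / Gamma_fn s).
  rewrite <- (Rmult_1_l (parabJ _ _ / _)), <- (gauss_factor_cancel x (Y x)) by reflexivity.
  field. lra.
Qed.

Lemma psi_hat_parabJ (x : R) : psi x = parabJ (s - 1) (- Y x) / Gamma_fn s.
Proof.
  pose proof (Gamma_fn_pos s s_gt_1).
  change (exp (rho * (x - m) ^ 2 / (2 * sigma ^ 2)) *
          (exp (- (- Y x) ^ 2 / 4) / Gamma_fn s * parabJ (s - 1) (- Y x))
          = parabJ (s - 1) (- Y x) / Gamma_fn s).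
  rewrite <- (Rmult_1_l (parabJ _ _ / _)), <- (gauss_factor_cancel x (- Y x)) by ring.
  field. lra.
Qed.

Lemma Y_increasing (z w : R) : z < w -> Y z < Y w.
Proof.
  intro hzw. unfold Y, Rdiv. apply Rmult_lt_compat_r; [apply Rinv_0_lt_compat, sigma_pos|].
  apply Rmult_lt_compat_r; [apply sqrt_lt_R0; lra | lra].
Qed.

Lemma continuous_Y (x : R) : continuous Y x.
Proof.
  apply (ex_derive_continuous (V := R_NormedModule)). unfold Y. auto_derive. lra.
Qed.

Lemma phi_hat_pos (x : R) : 0 < phi x.
Proof.
  rewrite phi_hat_parabJ. apply Rdiv_lt_0_compat.
  - apply parabJ_pos. pose proof s_gt_1. lra.
  - apply Gamma_fn_pos, s_gt_1.
Qed.

Lemma psi_hat_pos (x : R) : 0 < psi x.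
Proof.
  rewrite psi_hat_parabJ. apply Rdiv_lt_0_compat.
  - apply parabJ_pos. pose proof s_gt_1. lra.
  - apply Gamma_fn_pos, s_gt_1.
Qed.

Lemma phi_hat_decreasing (z w : R) : z < w -> phi w < phi z.
Proof.
  intro hzw. rewrite !phi_hat_parabJ. unfold Rdiv.
  apply Rmult_lt_compat_r; [apply Rinv_0_lt_compat, Gamma_fn_pos, s_gt_1|].
  apply parabJ_decreasing; [pose proof s_gt_1; lra | apply Y_increasing, hzw].
Qed.

Lemma psi_hat_increasing (z w : R) : z < w -> psi z < psi w.
Proof.
  intro hzw. rewrite !psi_hat_parabJ. unfold Rdiv.
  apply Rmult_lt_compat_r; [apply Rinv_0_lt_compat, Gamma_fn_pos, s_gt_1|].
  apply parabJ_decreasing; [pose proof s_gt_1; lra|].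
  pose proof (Y_increasing z w hzw). lra.
Qed.

Lemma continuous_phi_hat (x : R) : continuous phi x.
Proof.
  apply (continuous_ext (fun x => parabJ (s - 1) (Y x) / Gamma_fn s)).
  { intro t. symmetry. apply phi_hat_parabJ. }
  apply (continuous_scal_l (fun x => parabJ (s - 1) (Y x)) (/ Gamma_fn s)).
  apply (continuous_comp Y (parabJ (s - 1))); [apply continuous_Y|].
  apply continuous_parabJ. pose proof s_gt_1. lra.
Qed.

Lemma continuous_psi_hat (x : R) : continuous psi x.
Proof.
  apply (continuous_ext (fun x => parabJ (s - 1) (- Y x) / Gamma_fn s)).
  { intro t. symmetry. apply psi_hat_parabJ. }
  apply (continuous_scal_l (fun x => parabJ (s - 1) (- Y x)) (/ Gamma_fn s)).
  apply (continuous_comp (fun x => - Y x) (parabJ (s - 1))).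
  - apply (continuous_opp Y), continuous_Y.
  - apply continuous_parabJ. pose proof s_gt_1. lra.
Qed.

Lemma m_hat'_pos (z : R) : 0 < m' z.
Proof.
  apply Rmult_lt_0_compat; [apply Rdiv_lt_0_compat; [lra | apply pow_lt, sigma_pos] | apply exp_pos].
Qed.

Lemma continuous_m_hat' (z : R) : continuous m' z.
Proof.
  apply (ex_derive_continuous (V := R_NormedModule)). unfold m_hat'. auto_derive. lra.
Qed.

Lemma m_hat'_le_exp (e z : R) :
  m' z <= 2 / sigma ^ 2 * exp (rho * (e ^ 2 + 2 * e * m) / sigma ^ 2)
          * exp (- (2 * e * rho / sigma ^ 2) * z).
Proof.
  unfold m_hat'. rewrite Rmult_assoc, <- exp_plus.
  apply Rmult_le_compat_l; [apply Rlt_le, Rdiv_lt_0_compat; [lra | apply pow_lt, sigma_pos]|].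
  apply exp_le. unfold Rdiv.
  assert (hs : 0 < / sigma ^ 2) by (apply Rinv_0_lt_compat, pow_lt, sigma_pos).
  assert (0 <= rho * / sigma ^ 2 * (z - m - e) ^ 2)
    by (apply Rmult_le_pos; [nra | apply pow2_ge_0]).
  nra.
Qed.

Lemma continuous_m_phi (z : R) : continuous (fun z => m' z * phi z) z.
Proof. apply (continuous_mult m' phi); [apply continuous_m_hat' | apply continuous_phi_hat]. Qed.

Lemma continuous_m_psi (z : R) : continuous (fun z => m' z * psi z) z.
Proof. apply (continuous_mult m' psi); [apply continuous_m_hat' | apply continuous_psi_hat]. Qed.

Lemma m_phi_ratio_decreasing (z w : R) : z < w ->
  m' w * phi w * (m' z * psi z) < m' z * phi z * (m' w * psi w).
Proof.
  intro hzw.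
  pose proof (phi_hat_decreasing z w hzw). pose proof (psi_hat_increasing z w hzw).
  pose proof (phi_hat_pos w). pose proof (psi_hat_pos z).
  assert (0 < m' z * m' w) by (apply Rmult_lt_0_compat; apply m_hat'_pos).
  assert (phi w * psi z < phi z * psi w) by nra.
  nra.
Qed.

Lemma ex_RInt_gen_m_phi (b : R) :
  ex_RInt_gen (fun z => m' z * phi z) (at_point b) (Rbar_locally p_infty).
Proof.
  apply (ex_RInt_gen_at_point_pinfty _ b
           (2 / sigma ^ 2 * exp (rho * (1 ^ 2 + 2 * 1 * m) / sigma ^ 2) * phi b)
           (- (2 * 1 * rho / sigma ^ 2))).
  { assert (0 < 2 * 1 * rho / sigma ^ 2) by (apply Rdiv_lt_0_compat; [lra | apply pow_lt, sigma_pos]).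
    lra. }
  intros z hz. split; [apply continuous_m_phi|].
  pose proof (m_hat'_pos z). pose proof (phi_hat_pos z). split; [nra|].
  assert (phi z <= phi b) by (destruct hz as [hz | ->]; [apply Rlt_le, phi_hat_decreasing, hz | lra]).
  pose proof (m_hat'_le_exp 1 z). pose proof (exp_pos (- (2 * 1 * rho / sigma ^ 2) * z)).
  nra.
Qed.

Lemma ex_RInt_gen_m_psi (a : R) :
  ex_RInt_gen (fun z => m' z * psi z) (Rbar_locally m_infty) (at_point a).
Proof.
  apply (ex_RInt_gen_minfty_at_point _ a
           (2 / sigma ^ 2 * exp (rho * ((-1) ^ 2 + 2 * -1 * m) / sigma ^ 2) * psi a)
           (- (2 * -1 * rho / sigma ^ 2))).
  { assert (0 < 2 * 1 * rho / sigma ^ 2) by (apply Rdiv_lt_0_compat; [lra | apply pow_lt, sigma_pos]).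
    unfold Rdiv in *. lra. }
  intros z hz. split; [apply continuous_m_psi|].
  pose proof (m_hat'_pos z). pose proof (psi_hat_pos z). split; [nra|].
  assert (psi z <= psi a) by (destruct hz as [hz | ->]; [apply Rlt_le, psi_hat_increasing, hz | lra]).
  pose proof (m_hat'_le_exp (-1) z). pose proof (exp_pos (- (2 * -1 * rho / sigma ^ 2) * z)).
  nra.
Qed.

Lemma optimal_boundaries_balance_form (c1 c2 theta a b : R) :
  optimal_boundaries r rho m sigma c1 c2 theta a b ->
  let K := (r + rho) * (c1 + c2) in
  let al := theta - (r + rho) * c1 in
  a < al /\ al + K < b /\
  RInt (fun z => (z - al) * (m' z * phi z)) a b
    = - K * RInt_gen (fun z => m' z * phi z) (at_point b) (Rbar_locally p_infty) /\
  RInt (fun z => (z - (al + K)) * (m' z * psi z)) a b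
    = K * RInt_gen (fun z => m' z * psi z) (Rbar_locally m_infty) (at_point a).
Proof.
  intros (_ & ha & hb & Ep & Eq) K al. repeat split.
  - exact ha.
  - unfold al, K. lra.
  - rewrite (RInt_ext_R _ (fun z => (z - theta + (r + rho) * c1) * m' z * phi z))
      by (intro; unfold al; ring).
    rewrite Ep. unfold K. simpl. ring.
  - rewrite (RInt_ext_R _ (fun z => (z - theta - (r + rho) * c2) * m' z * psi z))
      by (intro; unfold al, K; ring).
    rewrite Eq. reflexivity.
Qed.

End OrnsteinUhlenbeck.

(** * Comparing the boundaries for two targets *)

Section Comparison.

Variables p q : R -> R.
Hypotheses (p_cont : forall z, continuous p z) (q_cont : forall z, continuous q z).
Hypothesis ratio_decreasing : forall z w, z < w -> p w * q z < p z * q w.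

Variables K al1 al2 a1 b1 a2 b2 : R.
Hypotheses (K_pos : 0 < K) (al_lt : al1 < al2).
Hypotheses (a1_lt : a1 < al1) (b1_gt : al1 + K < b1) (a2_lt : a2 < al2) (b2_gt : al2 + K < b2).

Definition balance (f : R -> R) : R :=
  RInt (fun z => (z - al2) * f z) a2 b2 - RInt (fun z => (z - al1) * f z) a1 b1
  - K * RInt f b1 b2.

Lemma balance_lincomb (f g h : R -> R) (A B : R) :
  (forall z, continuous f z) -> (forall z, continuous g z) ->
  (forall z, h z = A * f z + B * g z) ->
  balance h = A * balance f + B * balance g.
Proof.
  intros Hf Hg Hh.
  assert (Hex : forall u : R -> R, (forall z, continuous u z) -> forall c x y,
            ex_RInt (fun z => (z - c) * u z) x y).
  { intros u Hu c x y. apply ex_RInt_of_continuous_everywhere.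
    intro z. apply continuous_affine_weight, Hu. }
  assert (weighted : forall c x y, RInt (fun z => (z - c) * h z) x y
            = A * RInt (fun z => (z - c) * f z) x y + B * RInt (fun z => (z - c) * g z) x y).
  { intros c x y.
    rewrite (RInt_ext_R _ (fun z => A * ((z - c) * f z) + B * ((z - c) * g z)))
      by (intro z; rewrite Hh; ring).
    apply RInt_lincomb; apply Hex; assumption. }
  assert (plain : forall x y, RInt h x y = A * RInt f x y + B * RInt g x y).
  { intros x y. rewrite (RInt_ext_R h _ x y Hh).
    apply RInt_lincomb; apply ex_RInt_of_continuous_everywhere; assumption. }
  unfold balance. rewrite !weighted, plain. simpl. ring.
Qed.

Lemma balance_split (f : R -> R) (beta : R) : (forall z, continuous f z) ->
  balance f = RInt (fun z => (z - beta) * f z) a2 a1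
              + RInt (fun z => (z - (beta + K)) * f z) b1 b2
              + (beta - al2) * RInt f a2 b2 + (al1 - beta) * RInt f a1 b1.
Proof.
  intro Hf. unfold balance. rewrite !RInt_affine_weight_from_0 by exact Hf.
  rewrite (RInt_from_0 f a2 b2 Hf), (RInt_from_0 f a1 b1 Hf), (RInt_from_0 f b1 b2 Hf).
  simpl. ring.
Qed.

Lemma balance_of_pinfty_tails :
  ex_RInt_gen p (at_point b2) (Rbar_locally p_infty) ->
  RInt (fun z => (z - al1) * p z) a1 b1 = - K * RInt_gen p (at_point b1) (Rbar_locally p_infty) ->
  RInt (fun z => (z - al2) * p z) a2 b2 = - K * RInt_gen p (at_point b2) (Rbar_locally p_infty) ->
  balance p = 0.
Proof.
  intros Htail E1 E2. unfold balance. rewrite E1, E2.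
  rewrite (RInt_gen_pinfty_Chasles p b1 b2 p_cont Htail). simpl. ring.
Qed.

Lemma balance_of_minfty_tails :
  ex_RInt_gen q (Rbar_locally m_infty) (at_point a1) ->
  RInt (fun z => (z - (al1 + K)) * q z) a1 b1 = K * RInt_gen q (Rbar_locally m_infty) (at_point a1) ->
  RInt (fun z => (z - (al2 + K)) * q z) a2 b2 = K * RInt_gen q (Rbar_locally m_infty) (at_point a2) ->
  balance q = 0.
Proof.
  intros Htail E1 E2.
  rewrite (RInt_gen_minfty_Chasles q a1 a2 q_cont Htail) in E2.
  unfold balance. rewrite !RInt_affine_weight_from_0 in * by exact q_cont.
  rewrite (RInt_from_0 q a1 a2 q_cont), (RInt_from_0 q b1 b2 q_cont) in *.
  simpl in *. lra.
Qed.

Definition crossing (M z : R) : R := q M * p z - p M * q z.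

Lemma continuous_crossing (M z : R) : continuous (crossing M) z.
Proof.
  apply (continuous_minus (fun z => q M * p z) (fun z => p M * q z)).
  - apply (continuous_scal_r (q M) p), p_cont.
  - apply (continuous_scal_r (p M) q), q_cont.
Qed.

Lemma balance_crossing (M : R) : balance p = 0 -> balance q = 0 -> balance (crossing M) = 0.
Proof.
  intros Hp Hq. rewrite (balance_lincomb p q (crossing M) (q M) (- p M)) by
    (assumption || (intro; unfold crossing; ring)).
  rewrite Hp, Hq. ring.
Qed.

Lemma crossing_weight_nonpos (M c z : R) :
  (z < M -> z <= c) -> (M < z -> c <= z) -> (z - c) * crossing M z <= 0.
Proof.
  intros Hlt Hgt. unfold crossing.
  destruct (Rtotal_order z M) as [h | [-> | h]].
  - specialize (ratio_decreasing z M h). specialize (Hlt h). nra.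
  - replace (q M * p M - p M * q M) with 0 by ring. lra.
  - specialize (ratio_decreasing M z h). specialize (Hgt h). nra.
Qed.

Lemma crossing_weight_nonneg (M c z : R) :
  (z < M -> c <= z) -> (M < z -> z <= c) -> 0 <= (z - c) * crossing M z.
Proof.
  intros Hlt Hgt. unfold crossing.
  destruct (Rtotal_order z M) as [h | [-> | h]].
  - specialize (ratio_decreasing z M h). specialize (Hlt h). nra.
  - replace (q M * p M - p M * q M) with 0 by ring. lra.
  - specialize (ratio_decreasing M z h). specialize (Hgt h). nra.
Qed.

Lemma crossing_pos (M z : R) : z < M -> 0 < crossing M z.
Proof. intro h. specialize (ratio_decreasing z M h). unfold crossing. lra. Qed.

Lemma crossing_neg (M z : R) : M < z -> crossing M z < 0.
Proof. intro h. specialize (ratio_decreasing M z h). unfold crossing. lra. Qed.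

Lemma balance_crossing_neg_of_lower : a2 <= a1 -> b2 <= b1 -> balance (crossing b1) < 0.
Proof.
  intros ha hb. set (f := crossing b1).
  assert (Hf : forall z, continuous f z) by apply continuous_crossing.
  assert (Hwf : forall c (z : R), continuous (fun z : R => (z - c) * f z) z)
    by (intros; apply continuous_affine_weight, Hf).
  rewrite (balance_split f al1 Hf).
  assert (RInt (fun z => (z - al1) * f z) a2 a1 <= 0).
  { apply RInt_nonpos; [apply Hwf | exact ha |].
    intros z hz. apply crossing_weight_nonpos; lra. }
  assert (0 <= RInt (fun z => (z - (al1 + K)) * f z) b2 b1).
  { apply RInt_nonneg; [apply Hwf | exact hb |].
    intros z hz. apply crossing_weight_nonneg; lra. }
  assert (0 < RInt f a2 b2).
  { apply RInt_gt_0; [lra | intros z hz; apply crossing_pos; lra | intros; apply Hf]. }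
  rewrite (RInt_swap _ b2 b1 (Hwf _)).
  replace (al1 - al1) with 0 by ring. nra.
Qed.

Lemma balance_crossing_neg_of_wider :
  a2 <= a1 -> b1 < b2 -> balance (crossing (Rmax b1 (al2 + K))) < 0.
Proof.
  intros ha hb. pose proof (Rmax_l b1 (al2 + K)). pose proof (Rmax_r b1 (al2 + K)).
  set (M := Rmax b1 (al2 + K)) in *. set (f := crossing M).
  assert (Hf : forall z, continuous f z) by apply continuous_crossing.
  assert (Hwf : forall c (z : R), continuous (fun z : R => (z - c) * f z) z)
    by (intros; apply continuous_affine_weight, Hf).
  rewrite (balance_split f al2 Hf).
  assert (RInt (fun z => (z - al2) * f z) a2 a1 <= 0).
  { apply RInt_nonpos; [apply Hwf | exact ha |].
    intros z hz. apply crossing_weight_nonpos; lra. }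
  assert (RInt (fun z => (z - (al2 + K)) * f z) b1 b2 <= 0).
  { apply RInt_nonpos; [apply Hwf | lra |].
    intros z hz. apply crossing_weight_nonpos; [|lra].
    intro hzM. apply Rnot_lt_le. intro hz'.
    assert (M < z) by (apply Rmax_lub_lt; lra). lra. }
  assert (0 < RInt f a1 b1).
  { apply RInt_gt_0; [lra | intros z hz; apply crossing_pos; lra | intros; apply Hf]. }
  replace (al2 - al2) with 0 by ring. nra.
Qed.

Lemma balance_crossing_pos_of_narrower :
  a1 < a2 -> b2 <= b1 -> 0 < balance (crossing (Rmin a2 al1)).
Proof.
  intros ha hb. pose proof (Rmin_l a2 al1). pose proof (Rmin_r a2 al1).
  set (M := Rmin a2 al1) in *. set (f := crossing M).
  assert (Hf : forall z, continuous f z) by apply continuous_crossing.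
  assert (Hwf : forall c (z : R), continuous (fun z : R => (z - c) * f z) z)
    by (intros; apply continuous_affine_weight, Hf).
  rewrite (balance_split f al1 Hf).
  assert (RInt (fun z => (z - al1) * f z) a1 a2 <= 0).
  { apply RInt_nonpos; [apply Hwf | lra |].
    intros z hz. apply crossing_weight_nonpos; [lra|].
    intro hMz. apply Rnot_lt_le. intro hz'.
    assert (z < M) by (apply Rmin_glb_lt; lra). lra. }
  assert (RInt (fun z => (z - (al1 + K)) * f z) b2 b1 <= 0).
  { apply RInt_nonpos; [apply Hwf | exact hb |].
    intros z hz. apply crossing_weight_nonpos; lra. }
  assert (RInt f a2 b2 < 0).
  { apply RInt_neg; [apply Hf | lra |]. intros z hz. apply crossing_neg. lra. }
  rewrite (RInt_swap _ a1 a2 (Hwf _)), (RInt_swap _ b2 b1 (Hwf _)).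
  replace (al1 - al1) with 0 by ring. nra.
Qed.

Lemma boundaries_increasing : balance p = 0 -> balance q = 0 -> a1 < a2 /\ b1 < b2.
Proof.
  intros Hp Hq.
  assert (H0 : forall M, balance (crossing M) = 0) by (intro; apply balance_crossing; assumption).
  pose proof balance_crossing_neg_of_lower as lower.
  pose proof balance_crossing_neg_of_wider as wider.
  pose proof balance_crossing_pos_of_narrower as narrower.
  rewrite !H0 in lower, wider, narrower.
  split.
  - destruct (Rlt_or_le a1 a2) as [h | h]; [exact h | exfalso].
    destruct (Rle_or_lt b2 b1) as [h' | h'];
      [specialize (lower h h') | specialize (wider h h')]; lra.
  - destruct (Rlt_or_le b1 b2) as [h | h]; [exact h | exfalso].
    destruct (Rle_or_lt a2 a1) as [h' | h'];
      [specialize (lower h' h) | specialize (narrower h' h)]; lra.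
Qed.

End Comparison.

Theorem proposition4p4 :
  forall r rho m sigma c1 c2 : R,
    0 < r -> 0 < rho -> 0 < sigma -> 0 < c1 + c2 ->
    forall theta1 theta2 a1 b1 a2 b2 : R,
      theta1 < theta2 ->
      optimal_boundaries r rho m sigma c1 c2 theta1 a1 b1 ->
      optimal_boundaries r rho m sigma c1 c2 theta2 a2 b2 ->
      a1 < a2 /\ b1 < b2.
Proof.
  intros r rho m sigma c1 c2 Hr Hrho Hs Hc theta1 theta2 a1 b1 a2 b2 Hth H1 H2.
  destruct (optimal_boundaries_balance_form r rho m sigma c1 c2 theta1 a1 b1 H1)
    as (ha1 & hb1 & Ep1 & Eq1).
  destruct (optimal_boundaries_balance_form r rho m sigma c1 c2 theta2 a2 b2 H2)
    as (ha2 & hb2 & Ep2 & Eq2).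
  apply (boundaries_increasing _ _ (continuous_m_phi r rho m sigma Hr Hrho Hs)
           (continuous_m_psi r rho m sigma Hr Hrho Hs)
           (m_phi_ratio_decreasing r rho m sigma Hr Hrho Hs)
           ((r + rho) * (c1 + c2)) (theta1 - (r + rho) * c1) (theta2 - (r + rho) * c1));
    try assumption; try nra.
  - apply balance_of_pinfty_tails; auto using continuous_m_phi, ex_RInt_gen_m_phi.
  - apply balance_of_minfty_tails; auto using continuous_m_psi, ex_RInt_gen_m_psi.
Qed.
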